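(* Let $F:\mathcal{G}_{\Sigma,\Delta,\pi}\to\mathcal{G}_{\Sigma,\Delta,\pi}$ be a causal graph dynamics that is monotonic for the subgraph order and admits a monotonic local rule, and let $\widetilde{F}:\mathbf{G}_{\Sigma,\Delta,\pi}\to\mathbf{G}_{\Sigma,\Delta,\pi}$ be a functor with $\mathrm{U}\circ F=\widetilde{F}\circ\mathrm{U}$. Define $\overline{F}(R):=|\widetilde{F}(\varnothing_R)|$ for every renaming $R$. Then for every renaming $R$, $\overline{F}(R)$ is a conjugate of $R$ for $F$, i.e. for every graph $G$, $F(R(G))=\overline{F}(R)(F(G))$.
   Context: Fix an uncountably infinite set $\mathcal{V}$, sets $\Sigma,\Delta$, finite $\pi$. Graphs: countable $V(G)\subset\mathcal{V}$, a set $E(G)$ of pairwise disjoint two-element subsets of $V(G)\times\pi$, partial labelings $\sigma(G),\delta(G)$; $\mathcal{G}_{\Sigma,\Delta,\pi}$ the set of graphs, ordered by componentwise inclusion $\subseteq$. Renamings are bijections of $\mathcal{V}$, acting naturally on graphs ($V(R(G))=R(V(G))$, edges $\{u\!:\!i,v\!:\!j\}\mapsto\{R(u)\!:\!i,R(v)\!:\!j\}$, labelings precomposed with $R^{-1}$). Disks $G^r_c$: vertices at distance $\le r+1$ from $c$, edges with an endpoint at distance $\le r$, vertex labels only at distance $\le r$. A local rule of radius $r$ maps radius-$r$ disks to graphs with renaming covariance, disjointness preservation, bounded output size and pairwise consistency of outputs on a common graph; a CGD is $F(G)=\bigcup_{v\in V(G)} f(G^r_v)$; monotonic means w.r.t.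 $\subseteq$. Category $\mathbf{G}_{\Sigma,\Delta,\pi}$: objects graphs, morphisms $m:G\to H$ given by renamings $|m|$ with $|m|(G)\subseteq H$, composition by composition of renamings. $\mathrm{U}$ is the identity on objects and sends $G\subseteq H$ to the morphism with identity renaming. $\varnothing_R:\varnothing\to\varnothing$ is the endomorphism of the empty graph with renaming $R$. *)

From Stdlib Require Import List.
Set Implicit Arguments.
Unset Strict Implicit.

Section Graphs.
Variables (V Sigma Delta pi : Type).

Definition port : Type := (V * pi)%type.

(* Raw graph data: vertex set, edge set (an unordered edge {a,b} is encoded as
   the symmetric pair of facts pE a b, pE b a), partial vertex labelling and
   partial edge labelling (partial functions encoded by their graphs). *)
Record pregraph := PG {
  pV : V -> Prop;
  pE : port -> port -> Prop;
  psig : V -> Sigma -> Prop;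
  pdel : port -> port -> Delta -> Prop }.

Definition countable_set (A : V -> Prop) : Prop :=
  exists h : V -> nat, forall x y, A x -> A y -> h x = h y -> x = y.

Definition wf (g : pregraph) : Prop :=
  countable_set (pV g) /\
  (forall a b, pE g a b -> pV g (fst a) /\ pV g (fst b)) /\
  (forall a b, pE g a b -> pE g b a) /\
  (forall a, ~ pE g a a) /\
  (forall a b c, pE g a b -> pE g a c -> b = c) /\
  (forall v s, psig g v s -> pV g v) /\
  (forall v s s', psig g v s -> psig g v s' -> s = s') /\
  (forall a b d, pdel g a b d -> pE g a b) /\
  (forall a b d, pdel g a b d -> pdel g b a d) /\
  (forall a b d d', pdel g a b d -> pdel g a b d' -> d = d').

Record graph := Graph { gr :> pregraph; gr_wf : wf gr }.

Definition subgraph (g h : pregraph) : Prop :=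
  (forall v, pV g v -> pV h v) /\
  (forall a b, pE g a b -> pE h a b) /\
  (forall v s, psig g v s -> psig h v s) /\
  (forall a b d, pdel g a b d -> pdel h a b d).

Definition pg_union (g h : pregraph) : pregraph :=
  PG (fun v => pV g v \/ pV h v) (fun a b => pE g a b \/ pE h a b)
     (fun v s => psig g v s \/ psig h v s)
     (fun a b d => pdel g a b d \/ pdel h a b d).

Definition pg_bigunion (g : pregraph) (k : V -> pregraph) : pregraph :=
  PG (fun w => exists v, pV g v /\ pV (k v) w)
     (fun a b => exists v, pV g v /\ pE (k v) a b)
     (fun w s => exists v, pV g v /\ psig (k v) w s)
     (fun a b d => exists v, pV g v /\ pdel (k v) a b d).

Definition pg_empty : pregraph :=
  PG (fun _ => False) (fun _ _ => False) (fun _ _ => False) (fun _ _ _ => False).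

Lemma wf_empty : wf pg_empty.
Proof.
  unfold wf; simpl; split; [exists (fun _ => 0); intros; contradiction|].
  repeat split; intros; tauto.
Qed.

Definition empty_graph : graph := Graph wf_empty.

Record renaming := Renaming {
  rn :> V -> V;
  rn_inv : V -> V;
  rn_invK : forall x, rn_inv (rn x) = x;
  rn_K : forall x, rn (rn_inv x) = x }.

Definition rinvp (R : renaming) (a : port) : port := (rn_inv R (fst a), snd a).

Definition ren_pg (R : renaming) (g : pregraph) : pregraph :=
  PG (fun v => pV g (rn_inv R v))
     (fun a b => pE g (rinvp R a) (rinvp R b))
     (fun v s => psig g (rn_inv R v) s)
     (fun a b d => pdel g (rinvp R a) (rinvp R b) d).

Lemma ren_wf (R : renaming) (g : pregraph) : wf g -> wf (ren_pg R g).
Proof.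
  intros [[h Hh] [H1 [H2 [H3 [H4 [H5 [H6 [H7 [H8 H9]]]]]]]]].
  unfold wf; simpl; repeat split.
  - exists (fun x => h (rn_inv R x)); intros x y Hx Hy E.
    rewrite <- (rn_K R x), <- (rn_K R y); f_equal; apply Hh; auto.
  - apply (H1 _ _ H).
  - apply (H1 _ _ H).
  - intros a b Hab; apply H2; exact Hab.
  - intros a Ha; apply (H3 _ Ha).
  - intros a b c Hb Hc; pose proof (H4 _ _ _ Hb Hc) as E.
    destruct b as [b i], c as [c j]; unfold rinvp in E; simpl in E.
    injection E; intros; subst; f_equal.
    rewrite <- (rn_K R b), <- (rn_K R c); congruence.
  - intros v s Hs; exact (H5 _ _ Hs).
  - intros v s s' A B; exact (H6 _ _ _ A B).
  - intros a b d Hd; exact (H7 _ _ _ Hd).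
  - intros a b d Hd; exact (H8 _ _ _ Hd).
  - intros a b d d' A B; exact (H9 _ _ _ _ A B).
Qed.

Definition ren_graph (R : renaming) (G : graph) : graph := Graph (ren_wf R (gr_wf G)).

Definition id_ren : renaming :=
  @Renaming (fun x => x) (fun x => x) (fun x => eq_refl) (fun x => eq_refl).

Definition comp_ren (R2 R1 : renaming) : renaming.
Proof.
  refine (@Renaming (fun x => R2 (R1 x)) (fun x => rn_inv R1 (rn_inv R2 x)) _ _).
  - intro x; rewrite rn_invK; apply rn_invK.
  - intro x; rewrite rn_K; apply rn_K.
Defined.

Definition adj (g : pregraph) (u v : V) : Prop := exists i j, pE g (u, i) (v, j).

Fixpoint within (g : pregraph) (n : nat) (c v : V) : Prop :=
  match n with
  | 0 => v = c
  | S m => within g m c v \/ exists u, within g m c u /\ adj g u v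
  end.

Definition disk (g : pregraph) (r : nat) (c : V) : pregraph :=
  PG (fun v => pV g v /\ within g (S r) c v)
     (fun a b => pE g a b /\ (within g r c (fst a) \/ within g r c (fst b)))
     (fun v s => psig g v s /\ within g r c v)
     (fun a b d => pdel g a b d /\ (within g r c (fst a) \/ within g r c (fst b))).

Definition is_disk (r : nat) (D : pregraph) : Prop :=
  exists (G : graph) (c : V), pV G c /\ D = disk G r c.

Definition consistent (g h : pregraph) : Prop := wf (pg_union g h).

(* local rule of radius r (f is only constrained on D^r) *)
Definition local_rule (r : nat) (f : pregraph -> pregraph) : Prop :=
  (forall D, is_disk r D -> wf (f D)) /\
  (forall (R : renaming) D, is_disk r D -> f (ren_pg R D) = ren_pg R (f D)) /\
  (forall D D', is_disk r D -> is_disk r D' ->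
     (forall v, pV D v -> pV D' v -> False) ->
     (forall v, pV (f D) v -> pV (f D') v -> False)) /\
  (exists b : nat, forall D, is_disk r D ->
     exists l : list V, length l <= b /\ forall v, pV (f D) v -> In v l) /\
  (forall (G : graph) u v, pV G u -> pV G v ->
     consistent (f (disk G r u)) (f (disk G r v))).

Definition monotonic_local_rule (r : nat) (f : pregraph -> pregraph) : Prop :=
  forall D D', is_disk r D -> is_disk r D' -> subgraph D D' -> subgraph (f D) (f D').

Definition induced_by (F : graph -> graph) (r : nat) (f : pregraph -> pregraph) : Prop :=
  forall G : graph, gr (F G) = pg_bigunion G (fun v => f (disk G r v)).

Definition monotonic (F : graph -> graph) : Prop :=
  forall G H : graph, subgraph G H -> subgraph (F G) (F H).

Definition hom (G H : graph) : Type := { R : renaming | subgraph (ren_pg R G) H }.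

Definition hren (G H : graph) (m : hom G H) : renaming := proj1_sig m.

Lemma id_hom_proof (G : graph) : subgraph (ren_pg id_ren G) G.
Proof.
  unfold subgraph; simpl; repeat split.
  - intros v Hv; exact Hv.
  - intros [a i] [b j] H; exact H.
  - intros v s H; exact H.
  - intros [a i] [b j] d H; exact H.
Qed.

Definition id_hom (G : graph) : hom G G := exist _ id_ren (id_hom_proof G).

Lemma comp_hom_proof (G H K : graph) (m2 : hom H K) (m1 : hom G H) :
  subgraph (ren_pg (comp_ren (hren m2) (hren m1)) G) K.
Proof.
  destruct m2 as [R2 [A2 [B2 [C2 D2]]]], m1 as [R1 [A1 [B1 [C1 D1]]]]; simpl in *.
  unfold subgraph; simpl; repeat split.
  - intros v Hv; apply A2, A1; exact Hv.
  - intros a b Hab; apply B2, B1; exact Hab.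
  - intros v s Hs; apply C2, C1; exact Hs.
  - intros a b d Hd; apply D2, D1; exact Hd.
Qed.

Definition comp_hom (G H K : graph) (m2 : hom H K) (m1 : hom G H) : hom G K :=
  exist _ (comp_ren (hren m2) (hren m1)) (comp_hom_proof m2 m1).

Lemma incl_proof (G H : graph) : subgraph G H -> subgraph (ren_pg id_ren G) H.
Proof.
  intros [A [B [C D]]]; unfold subgraph; simpl; repeat split.
  - intros v Hv; apply A; exact Hv.
  - intros [a i] [b j] Hab; apply B; exact Hab.
  - intros v s Hs; apply C; exact Hs.
  - intros [a i] [b j] d Hd; apply D; exact Hd.
Qed.

Definition U_incl (G H : graph) (h : subgraph G H) : hom G H :=
  exist _ id_ren (incl_proof h).

Lemma empty_hom_proof (R : renaming) : subgraph (ren_pg R empty_graph) empty_graph.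
Proof. unfold subgraph; simpl; repeat split; intros; assumption. Qed.

Definition empty_hom (R : renaming) : hom empty_graph empty_graph :=
  exist _ R (empty_hom_proof R).

(* functoriality of (Fob, Fmor); equality of morphisms = equality of renamings *)
Definition is_functor (Fob : graph -> graph)
  (Fmor : forall G H : graph, hom G H -> hom (Fob G) (Fob H)) : Prop :=
  (forall G x, rn (hren (Fmor G G (id_hom G))) x = x) /\
  (forall (G H K : graph) (m2 : hom H K) (m1 : hom G H) x,
     rn (hren (Fmor G K (comp_hom m2 m1))) x
     = rn (hren (Fmor H K m2)) (rn (hren (Fmor G H m1)) x)).

(* U ∘ F = F~ ∘ U  (F seen as a functor on the poset (G, ⊆)) *)
Definition commutes_with_U (F : graph -> graph) (Fob : graph -> graph)
  (Fmor : forall G H : graph, hom G H -> hom (Fob G) (Fob H)) : Prop :=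
  (forall G, Fob G = F G) /\
  (forall (G H : graph) (h : subgraph G H) x, rn (hren (Fmor G H (U_incl h))) x = x).

Definition Fbar (Fob : graph -> graph)
  (Fmor : forall G H : graph, hom G H -> hom (Fob G) (Fob H)) (R : renaming) : renaming :=
  hren (Fmor empty_graph empty_graph (empty_hom R)).

End Graphs.

(* Functoriality alone forces the conjugation.  The renaming R is a morphism
   m_R : G -> R(G), and m_R composed with the inclusion of the empty graph into
   G equals the inclusion of the empty graph into R(G) composed with the empty
   endomorphism with renaming R.  Since F~ sends inclusions to identity
   renamings, F~(m_R) has renaming Fbar(R), which yields
   Fbar(R)(F(G)) ⊆ F(R(G)).  Applying this to R^-1 and R(G), and using
   Fbar(R) ∘ Fbar(R^-1) = Fbar(id) = id, gives the reverse inclusion. *)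
From Stdlib Require Import List.
From Stdlib Require Import FunctionalExtensionality PropExtensionality ProofIrrelevance.

Set Implicit Arguments.
Unset Strict Implicit.

Section Renamings.
Variables V Sigma Delta pi : Type.

Lemma renaming_ext (S T : renaming V) : (forall x, S x = T x) -> S = T.
Proof.
  destruct S as [f fi fK Kf], T as [g gi gK Kg]; simpl; intro E.
  assert (f = g) by (apply functional_extensionality; exact E); subst g.
  assert (fi = gi).
  { apply functional_extensionality; intro x.
    rewrite <- (Kg x) at 1; apply fK. }
  subst gi; f_equal; apply proof_irrelevance.
Qed.

Lemma hom_ext (G H : graph V Sigma Delta pi) (m1 m2 : hom G H) :
  (forall x, hren m1 x = hren m2 x) -> m1 = m2.
Proof.
  destruct m1 as [S1 P1], m2 as [S2 P2]; simpl; intro E.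
  assert (S1 = S2) by (apply renaming_ext; exact E); subst S2.
  f_equal; apply proof_irrelevance.
Qed.

Lemma graph_ext (G H : graph V Sigma Delta pi) : gr G = gr H -> G = H.
Proof.
  destruct G as [g Pg], H as [h Ph]; simpl; intro E; subst h.
  f_equal; apply proof_irrelevance.
Qed.

Lemma subgraph_refl (g : pregraph V Sigma Delta pi) : subgraph g g.
Proof. unfold subgraph; repeat split; auto. Qed.

Lemma subgraph_antisym (g h : pregraph V Sigma Delta pi) :
  subgraph g h -> subgraph h g -> g = h.
Proof.
  destruct g as [a b c d], h as [a' b' c' d']; unfold subgraph; simpl.
  intros [A1 [B1 [C1 D1]]] [A2 [B2 [C2 D2]]].
  f_equal; repeat (apply functional_extensionality; intro);
    apply propositional_extensionality; split; auto.
Qed.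

Lemma subgraph_empty (g : pregraph V Sigma Delta pi) : subgraph (empty_graph V Sigma Delta pi) g.
Proof. unfold subgraph; simpl; repeat split; intros; contradiction. Qed.

Lemma ren_pg_subgraph (R : renaming V) (g h : pregraph V Sigma Delta pi) :
  subgraph g h -> subgraph (ren_pg R g) (ren_pg R h).
Proof.
  unfold subgraph; simpl; intros [A [B [C D]]]; repeat split; intros; auto.
Qed.

Lemma ren_pg_id (g : pregraph V Sigma Delta pi) : ren_pg (id_ren V) g = g.
Proof.
  destruct g as [a b c d]; unfold ren_pg, rinvp; simpl; f_equal;
    repeat (apply functional_extensionality; intros [? ?] || intro); reflexivity.
Qed.

Lemma ren_pg_comp (S T : renaming V) (g : pregraph V Sigma Delta pi) :
  ren_pg (comp_ren S T) g = ren_pg S (ren_pg T g).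
Proof. reflexivity. Qed.

Definition inv_ren (R : renaming V) : renaming V := Renaming (rn_K R) (rn_invK R).

Lemma ren_pg_invK (R : renaming V) (g : pregraph V Sigma Delta pi) :
  ren_pg (inv_ren R) (ren_pg R g) = g.
Proof.
  destruct g as [a b c d]; unfold ren_pg, rinvp; simpl; f_equal;
    repeat (apply functional_extensionality; intros [? ?] || intro);
    simpl; rewrite ?rn_invK; reflexivity.
Qed.

Definition ren_hom (R : renaming V) (G : graph V Sigma Delta pi) :
  hom G (ren_graph R G) := exist _ R (subgraph_refl _).

End Renamings.

Section Conjugate.
Variables V Sigma Delta pi : Type.
Variables F Fob : graph V Sigma Delta pi -> graph V Sigma Delta pi.
Variable Fmor : forall G H : graph V Sigma Delta pi, hom G H -> hom (Fob G) (Fob H).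
Hypothesis Hfun : is_functor Fmor.
Hypothesis HU : commutes_with_U F Fmor.

Lemma Fbar_invK (R : renaming V) x : Fbar Fmor R (Fbar Fmor (inv_ren R) x) = x.
Proof.
  destruct Hfun as [Fmor_id Fmor_comp].
  assert (Einv : comp_hom (empty_hom Sigma Delta pi R) (empty_hom Sigma Delta pi (inv_ren R))
                 = id_hom _).
  { apply hom_ext; intro y; apply rn_K. }
  pose proof (Fmor_comp _ _ _ (empty_hom Sigma Delta pi R)
                (empty_hom Sigma Delta pi (inv_ren R)) x) as E.
  rewrite Einv, Fmor_id in E; unfold Fbar; congruence.
Qed.

Lemma Fmor_ren_hom (R : renaming V) (G : graph V Sigma Delta pi) x :
  hren (Fmor (ren_hom R G)) x = Fbar Fmor R x.
Proof.
  destruct Hfun as [_ Fmor_comp]; destruct HU as [_ Fmor_incl].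
  pose proof (Fmor_comp _ _ _ (ren_hom R G) (U_incl (subgraph_empty G)) x) as E1.
  pose proof (Fmor_comp _ _ _ (U_incl (subgraph_empty (ren_graph R G)))
                (empty_hom Sigma Delta pi R) x) as E2.
  assert (Esquare : comp_hom (ren_hom R G) (U_incl (subgraph_empty G))
                    = comp_hom (U_incl (subgraph_empty (ren_graph R G)))
                        (empty_hom Sigma Delta pi R))
    by (apply hom_ext; reflexivity).
  rewrite Esquare, Fmor_incl in E1; rewrite Fmor_incl in E2.
  unfold Fbar; congruence.
Qed.

Lemma ren_Fbar_subgraph (R : renaming V) (G : graph V Sigma Delta pi) :
  subgraph (ren_pg (Fbar Fmor R) (F G)) (F (ren_graph R G)).
Proof.
  destruct HU as [Fob_F _].
  pose proof (proj2_sig (Fmor (ren_hom R G))) as Hsub.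
  change (subgraph (ren_pg (hren (Fmor (ren_hom R G))) (Fob G)) (Fob (ren_graph R G)))
    in Hsub.
  rewrite (renaming_ext (Fmor_ren_hom R G)), !Fob_F in Hsub.
  exact Hsub.
Qed.

Lemma ren_Fbar_F (R : renaming V) (G : graph V Sigma Delta pi) :
  F (ren_graph R G) = ren_graph (Fbar Fmor R) (F G).
Proof.
  apply graph_ext, subgraph_antisym; simpl; [| apply ren_Fbar_subgraph].
  pose proof (ren_Fbar_subgraph (inv_ren R) (ren_graph R G)) as Hsub.
  replace (ren_graph (inv_ren R) (ren_graph R G)) with G in Hsub
    by (apply graph_ext; symmetry; apply ren_pg_invK).
  apply (ren_pg_subgraph (Fbar Fmor R)) in Hsub.
  rewrite <- ren_pg_comp,
    (renaming_ext (S := comp_ren _ _) (T := id_ren V) (Fbar_invK R)), ren_pg_id in Hsub.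
  exact Hsub.
Qed.

End Conjugate.

Theorem proposition4p11
  (V Sigma Delta pi : Type)
  (HV : ~ exists h : V -> nat, forall x y, h x = h y -> x = y)   (* V uncountable *)
  (Hpi : exists l : list pi, forall i, In i l)                     (* pi finite *)
  (F : graph V Sigma Delta pi -> graph V Sigma Delta pi)
  (HF : exists (r : nat) (f : pregraph V Sigma Delta pi -> pregraph V Sigma Delta pi),
          local_rule r f /\ monotonic_local_rule r f /\ induced_by F r f)
  (Hmono : monotonic F)
  (Fob : graph V Sigma Delta pi -> graph V Sigma Delta pi)
  (Fmor : forall G H : graph V Sigma Delta pi, hom G H -> hom (Fob G) (Fob H))
  (Hfun : is_functor Fmor)
  (HU : commutes_with_U F Fmor) :
  forall (R : renaming V) (G : graph V Sigma Delta pi),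
    F (ren_graph R G) = ren_graph (Fbar Fmor R) (F G).
Proof. exact (ren_Fbar_F Hfun HU). Qed.
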